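(* Let $\rho$ be a 2-qubit pure state whose Bloch representation has the form $\boldsymbol{\alpha}=O_1(\mu,0,0)^T$, $\boldsymbol{\beta}=O_2(\mu,0,0)^T$, $C=O_1\,\mathrm{diag}(1,\sin\theta,-\sin\theta)\,O_2^T$, with $\theta\in[0,\pi/2]$, $\mu=\cos\theta$, $O_1,O_2\in SO(3)$, and suppose $|\mu|=1$. Then $I_{\chi^2,post}(\rho)=2$.
   Context: Let $\sigma_1,\sigma_2,\sigma_3$ be the Pauli matrices. For a 2-qubit density matrix $\rho$ its Bloch vector is $(b_1,\dots,b_{16})$, where $b_1=1$; $(b_2,b_3,b_4)=\boldsymbol{\alpha}$ with $\alpha_j=\operatorname{tr}((\sigma_j\otimes I)\rho)$; $(b_5,b_6,b_7)=\boldsymbol{\beta}$ with $\beta_j=\operatorname{tr}((I\otimes\sigma_j)\rho)$; and $(b_8,\dots,b_{16})$ are the entries $C_{jk}=\operatorname{tr}((\sigma_j\otimes\sigma_k)\rho)$ of the $3\times3$ matrix $C$ in row-major order. Every 2-qubit pure state has a Bloch representation of the displayed form. For $b\in[-1,1]$ and $h\in(-1,1)$, $D_{\chi^2}(b,h)=\frac{((b+1)/2)^2}{(h+1)/2}+\frac{((1-b)/2)^2}{(1-h)/2}-1$; if $h=\pm1$ and $b=h$, set $D_{\chi^2}(b,h)=0$. The posterior information content of a pure state with Bloch vector $(b_1,\dots,b_{16})$ is defined as follows. For $i=2,\dots,16$, let $b_i^{max}$ and $b_i^{min}$ be the maximum and the minimum of the $i$-th Bloch component over all 2-qubit pure states whose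 components $1,\dots,i-1$ equal $b_1,\dots,b_{i-1}$, and let $h_i=(b_i^{max}+b_i^{min})/2$. Then $I_{\chi^2,post}=\sum_{i=2}^{16}D_{\chi^2}(b_i,h_i)$. *)

From HB Require Import structures.
From mathcomp Require Import all_boot all_order all_algebra.
From mathcomp Require Import complex mxtens.
From mathcomp Require Import classical_sets reals trigo.
Set Implicit Arguments. Unset Strict Implicit. Unset Printing Implicit Defensive.
Import Order.TTheory GRing.Theory Num.Theory.
Local Open Scope ring_scope.
Local Open Scope complex_scope.

Section Bloch.
Variable R : realType.

Definition pauli (a : nat) : 'M[R[i]]_2 :=
  \matrix_(r < 2, c < 2)
   match a with
   | 0 => if r == c then 1 else 0
   | 1 => if r == c then 0 else 1
   | 2 => if r == c then 0 else (if (r : nat) == 0%N then - 'i else 'i)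
   | _ => if r == c then (if (r : nat) == 0%N then 1 else -1) else 0
   end.

(* Index pairs (a,b) of the operator sigma_a (x) sigma_b (sigma_0 = I)
   attached to the Bloch component b_i, i = 1..16 (paper's numbering). *)
Definition bloch_pair (i : nat) : nat * nat :=
  if i == 1%N then (0%N, 0%N)
  else if (i <= 4)%N then ((i - 1)%N, 0%N)
  else if (i <= 7)%N then (0%N, (i - 4)%N)
  else (((i - 8) %/ 3).+1, ((i - 8) %% 3).+1).

Definition bloch_op (i : nat) : 'M[R[i]]_(2 * 2) :=
  pauli (bloch_pair i).1 *t pauli (bloch_pair i).2.

Definition density (psi : 'cV[R[i]]_(2 * 2)) : 'M[R[i]]_(2 * 2) :=
  psi *m (map_mx conjc psi)^T.

Definition unit_vector (psi : 'cV[R[i]]_(2 * 2)) : Prop :=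
  \sum_(k < 2 * 2) (psi k 0)^* * psi k 0 = 1.

Definition pure2 (rho : 'M[R[i]]_(2 * 2)) : Prop :=
  exists psi, unit_vector psi /\ rho = density psi.

Definition bloch (rho : 'M[R[i]]_(2 * 2)) (i : nat) : R :=
  complex.Re (\tr (bloch_op i *m rho)).

Definition bl_alpha rho : 'cV[R]_3 := \col_(j < 3) bloch rho (j + 2)%N.
Definition bl_beta rho : 'cV[R]_3 := \col_(j < 3) bloch rho (j + 5)%N.
Definition bl_C rho : 'M[R]_3 :=
  \matrix_(j < 3, k < 3) bloch rho (8 + 3 * j + k)%N.

Definition fiber (rho : 'M[R[i]]_(2 * 2)) (i : nat) : set R :=
  [set x | exists rho', pure2 rho' /\
     (forall j, (1 <= j < i)%N -> bloch rho' j = bloch rho j) /\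
     x = bloch rho' i].

Definition bmax rho i : R := sup (fiber rho i).
Definition bmin rho i : R := inf (fiber rho i).
Definition hmid rho i : R := (bmax rho i + bmin rho i) / 2.

Definition Dchi2 (b h : R) : R :=
  if (h == 1) || (h == -1) then 0
  else ((b + 1) / 2) ^+ 2 / ((h + 1) / 2) + ((1 - b) / 2) ^+ 2 / ((1 - h) / 2) - 1.

Definition I_chi2_post (rho : 'M[R[i]]_(2 * 2)) : R :=
  \sum_(2 <= i < 17) Dchi2 (bloch rho i) (hmid rho i).

Definition SO3 (O : 'M[R]_3) : Prop := O^T *m O = 1%:M /\ \det O = 1.

End Bloch.

From HB Require Import structures.
From mathcomp Require Import all_boot all_order all_algebra.
From mathcomp Require Import complex mxtens.
From mathcomp Require Import classical_sets reals trigo.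
From mathcomp Require Import ring lra zify.
Import Order.TTheory GRing.Theory Num.Theory.
Local Open Scope ring_scope.

(* Write a pure state through its amplitudes p, q, r, s on |00>, |01>, |10>, |11>.
   The Bloch components are real quadratic forms in them, and with
   D = |ps - qr|^2 and b_1 = 1 one has 1 - |alpha|^2 = 1 - |beta|^2 = 4 D and
   sum_jk (C_jk - alpha_j beta_k)^2 = 8 D + 16 D^2.  So every pure state has
   |alpha| = |beta| <= 1, and |alpha| = 1 forces C = alpha beta^T; conversely
   any two unit vectors are the local Bloch vectors of a product state.
   When |alpha| = |mu| = 1, the fiber of each b_i, i <= 7, is therefore the
   symmetric interval [-s, s], s^2 = 1 - (squares of the earlier components
   of the same local vector), so h_i = 0 and D_chi2(b_i, h_i) = b_i^2; every b_i
   with i >= 8 is determined by b_2, ..., b_7, so h_i = b_i and D_chi2(b_i, h_i) = 0.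
   The sum is |alpha|^2 + |beta|^2 = 2. *)

Lemma big_mxtens (V : nmodType) m n (F : 'I_(m * n) -> V) :
  \sum_k F k = \sum_(i < m) \sum_(j < n) F (mxtens_index (i, j)).
Proof.
rewrite pair_big (reindex (@mxtens_index m n)) /=; first by apply: eq_bigr => -[].
by exists (@mxtens_unindex m n) => x _; [exact: mxtens_indexK | exact: mxtens_unindexK].
Qed.

Lemma big_ord2 (V : nmodType) (F : 'I_2 -> V) : \sum_i F i = F ord0 + F ord_max.
Proof. by rewrite big_ord_recl big_ord1; congr (_ + F _); apply: val_inj. Qed.

Lemma orthogonal_norm2 (K : comPzRingType) n (O : 'M[K]_n) (v : 'cV[K]_n) :
  O^T *m O = 1%:M ->
  (O *m v)^T *m (O *m v) = v^T *m v.
Proof. by move=> hO; rewrite trmx_mul mulmxA -(mulmxA v^T) hO mulmx1. Qed.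

Section TwoQubitBloch.
Variable R : realType.

Definition cnorm2 (u : R[i]) : R := complex.Re u ^+ 2 + complex.Im u ^+ 2.
(* [cdot u v] and [ccross u v] are the real and imaginary parts of [u^* v]. *)
Definition cdot (u v : R[i]) : R :=
  complex.Re u * complex.Re v + complex.Im u * complex.Im v.
Definition ccross (u v : R[i]) : R :=
  complex.Re u * complex.Im v - complex.Im u * complex.Re v.

Definition bloch_poly (p q r s : R[i]) (n : nat) : R :=
  match n with
  | 1 => cnorm2 p + cnorm2 q + cnorm2 r + cnorm2 s
  | 2 => 2 * (cdot p r + cdot q s)
  | 3 => 2 * (ccross p r + ccross q s)
  | 4 => cnorm2 p + cnorm2 q - cnorm2 r - cnorm2 s
  | 5 => 2 * (cdot p q + cdot r s)
  | 6 => 2 * (ccross p q + ccross r s)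
  | 7 => cnorm2 p - cnorm2 q + cnorm2 r - cnorm2 s
  | 8 => 2 * (cdot p s + cdot q r)
  | 9 => 2 * (ccross p s - ccross q r)
  | 10 => 2 * (cdot p r - cdot q s)
  | 11 => 2 * (ccross p s + ccross q r)
  | 12 => 2 * (cdot q r - cdot p s)
  | 13 => 2 * (ccross p r - ccross q s)
  | 14 => 2 * (cdot p q - cdot r s)
  | 15 => 2 * (ccross p q - ccross r s)
  | 16 => cnorm2 p - cnorm2 q - cnorm2 r + cnorm2 s
  | _ => 0
  end.


Definition amp (psi : 'cV[R[i]]_(2 * 2)) (a b : 'I_2) : R[i] :=
  psi (mxtens_index (a, b)) 0.

Definition amp_bloch psi : nat -> R :=
  bloch_poly (amp psi ord0 ord0) (amp psi ord0 ord_max)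
             (amp psi ord_max ord0) (amp psi ord_max ord_max).

Lemma bloch_density psi n : (1 <= n <= 16)%N ->
  bloch (density psi) n = amp_bloch psi n.
Proof.
have -> : bloch (density psi) n =
    complex.Re (\sum_(a < 2) \sum_(b < 2) \sum_(c < 2) \sum_(d < 2)
      pauli R (bloch_pair n).1 a c * pauli R (bloch_pair n).2 b d
      * (amp psi c d * (amp psi a b)^*)%C).
  rewrite /bloch /bloch_op /density /mxtrace big_mxtens; congr complex.Re.
  apply: eq_bigr => a _; apply: eq_bigr => b _.
  rewrite mxE big_mxtens; apply: eq_bigr => c _; apply: eq_bigr => d _.
  by rewrite tensmxE !mxE big_ord1 !mxE.
rewrite /amp_bloch !big_ord2.
move: (amp psi _ _) (amp psi _ _) (amp psi _ _) (amp psi _ _) => [a0 b0] [a1 b1] [a2 b2] [a3 b3].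
by case: n => [|[|[|[|[|[|[|[|[|[|[|[|[|[|[|[|[|n]]]]]]]]]]]]]]]]] //= _;
  rewrite /bloch_pair /= !mxE /= /cdot /ccross /cnorm2 /=; ring.
Qed.

Definition amp_det psi : R[i] :=
  amp psi ord0 ord0 * amp psi ord_max ord_max - amp psi ord0 ord_max * amp psi ord_max ord0.

Section Defects.
Variable psi : 'cV[R[i]]_(2 * 2).
Local Notation F := (amp_bloch psi).
Local Notation D := (cnorm2 (amp_det psi)).

Lemma amp_bloch_alpha_defect :
  F 1 ^+ 2 - (F 2 ^+ 2 + F 3 ^+ 2 + F 4 ^+ 2) = 4 * D.
Proof.
rewrite /amp_bloch /amp_det.
move: (amp psi _ _) (amp psi _ _) (amp psi _ _) (amp psi _ _) => [a0 b0] [a1 b1] [a2 b2] [a3 b3].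
by rewrite /= /cnorm2 /cdot /ccross /=; ring.
Qed.

Lemma amp_bloch_beta_defect :
  F 1 ^+ 2 - (F 5 ^+ 2 + F 6 ^+ 2 + F 7 ^+ 2) = 4 * D.
Proof.
rewrite /amp_bloch /amp_det.
move: (amp psi _ _) (amp psi _ _) (amp psi _ _) (amp psi _ _) => [a0 b0] [a1 b1] [a2 b2] [a3 b3].
by rewrite /= /cnorm2 /cdot /ccross /=; ring.
Qed.

Lemma amp_bloch_corr_defect :
  \sum_(j < 3) \sum_(k < 3) (F 1 * F (8 + 3 * j + k)%N - F (j + 2)%N * F (k + 5)%N) ^+ 2
  = 8 * D * F 1 ^+ 2 + 16 * D ^+ 2.
Proof.
rewrite !big_ord_recl !big_ord0 /= /amp_bloch /amp_det.
move: (amp psi _ _) (amp psi _ _) (amp psi _ _) (amp psi _ _) => [a0 b0] [a1 b1] [a2 b2] [a3 b3].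
by rewrite /= /cnorm2 /cdot /ccross /=; ring.
Qed.

End Defects.

Lemma unit_vectorE psi : unit_vector psi <-> amp_bloch psi 1 = 1.
Proof.
rewrite /unit_vector (_ : \sum_k _ = ((amp_bloch psi 1)%:C)%C).
  by split => [/(congr1 (@complex.Re R)) | ->].
rewrite big_mxtens !big_ord2 /amp_bloch /= /cnorm2 /amp.
move: (psi _ 0) (psi _ 0) (psi _ 0) (psi _ 0) => [a0 b0] [a1 b1] [a2 b2] [a3 b3].
by rewrite /=; congr Complex; ring.
Qed.

Implicit Types rho : 'M[R[i]]_(2 * 2).

Definition alpha_norm2 rho : R := \sum_(2 <= j < 5) bloch rho j ^+ 2.
Definition beta_norm2 rho : R := \sum_(5 <= j < 8) bloch rho j ^+ 2.

Lemma alpha_norm2E rho : alpha_norm2 rho = ((bl_alpha rho)^T *m bl_alpha rho) 0 0.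
Proof.
rewrite /alpha_norm2 mxE (big_addn 0) big_mkord.
by apply: eq_bigr => j _; rewrite !mxE expr2.
Qed.

Lemma pure2_amp_bloch rho : pure2 rho ->
  exists psi, amp_bloch psi 1 = 1 /\
    forall n, (1 <= n <= 16)%N -> bloch rho n = amp_bloch psi n.
Proof.
by case=> psi [/unit_vectorE psi1 ->]; exists psi; split => // n /bloch_density.
Qed.

Lemma pure2_bloch1 rho : pure2 rho -> bloch rho 1 = 1.
Proof. by case/pure2_amp_bloch => psi [psi1 Epsi]; rewrite Epsi. Qed.

Lemma pure2_alpha_norm2_le1 rho : pure2 rho -> alpha_norm2 rho <= 1.
Proof.
case/pure2_amp_bloch => psi [psi1 Epsi]; rewrite /alpha_norm2 unlock /= !Epsi //.
have := amp_bloch_alpha_defect psi; rewrite psi1 expr1n.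
have : 0 <= cnorm2 (amp_det psi) by rewrite addr_ge0 ?sqr_ge0.
lra.
Qed.

Lemma pure2_beta_norm2 rho : pure2 rho -> beta_norm2 rho = alpha_norm2 rho.
Proof.
case/pure2_amp_bloch => psi [_ Epsi]; rewrite /alpha_norm2 /beta_norm2 unlock /= !Epsi //.
have := amp_bloch_alpha_defect psi; have := amp_bloch_beta_defect psi; lra.
Qed.

Lemma pure2_corr_product rho : pure2 rho -> alpha_norm2 rho = 1 ->
  forall j k : 'I_3,
  bloch rho (8 + 3 * j + k)%N = bloch rho (j + 2)%N * bloch rho (k + 5)%N.
Proof.
case/pure2_amp_bloch => psi [psi1 Epsi] hA j k.
have D0 : cnorm2 (amp_det psi) = 0.
  move: hA; rewrite /alpha_norm2 unlock /= !Epsi //.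
  have := amp_bloch_alpha_defect psi; rewrite psi1; lra.
have := amp_bloch_corr_defect psi; rewrite D0 psi1 mulr0 mul0r expr0n /= mulr0 addr0.
move=> /(psumr_eq0P (fun j _ => sumr_ge0 _ (fun k _ => sqr_ge0 _))) /(_ j isT).
move=> /(psumr_eq0P (fun k _ => sqr_ge0 _)) /(_ k isT) /eqP.
have := ltn_ord j; have := ltn_ord k => hj hk.
by rewrite sqrf_eq0 subr_eq0 mul1r => /eqP; rewrite !Epsi //; lia.
Qed.

Definition qubit_bloch (e0 e1 : R[i]) (a : nat) : R :=
  match a with
  | 0 => cnorm2 e0 + cnorm2 e1
  | 1 => 2 * cdot e0 e1
  | 2 => 2 * ccross e0 e1
  | _ => cnorm2 e0 - cnorm2 e1
  end.

Lemma qubit_bloch_surj x y z : x ^+ 2 + y ^+ 2 + z ^+ 2 = 1 ->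
  exists e0 e1, [/\ qubit_bloch e0 e1 0 = 1, qubit_bloch e0 e1 1 = x,
                    qubit_bloch e0 e1 2 = y & qubit_bloch e0 e1 3 = z].
Proof.
have [-> hxyz|zN1 hxyz] := eqVneq z (-1).
  have [-> ->] : x = 0 /\ y = 0.
    rewrite sqrrN expr1n in hxyz; have := sqr_ge0 x; have := sqr_ge0 y.
    by split; apply/eqP; rewrite -sqrf_eq0 eq_le sqr_ge0 andbT; lra.
  by exists 0%C, 1%C; rewrite /= /cnorm2 /cdot /ccross /=; split; ring.
have z_gt : -1 < z by rewrite lt_neqAle eq_sym zN1 /=; nra.
pose c := Num.sqrt ((1 + z) / 2).
have c2 : c ^+ 2 = (1 + z) / 2 by rewrite sqr_sqrtr //; lra.
have c_neq0 : c != 0 by rewrite sqrtr_eq0 -ltNge; lra.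
exists (Complex c 0), (Complex (x / (2 * c)) (y / (2 * c))).
rewrite /= /cnorm2 /cdot /ccross /=.
have e1_norm2 : (x / (2 * c)) ^+ 2 + (y / (2 * c)) ^+ 2 = (1 - z) / 2.
  rewrite !expr_div_n -mulrDl exprMn c2.
  have -> : x ^+ 2 + y ^+ 2 = (1 - z) * (1 + z) by nra.
  by field; apply/eqP; lra.
by split; rewrite ?e1_norm2 ?c2; field.
Qed.

Lemma bloch_poly_tens e0 e1 f0 f1 n : (1 <= n <= 7)%N ->
  bloch_poly (e0 * f0) (e0 * f1) (e1 * f0) (e1 * f1) n =
  if (n <= 4)%N then qubit_bloch e0 e1 (n - 1) * qubit_bloch f0 f1 0
  else qubit_bloch e0 e1 0 * qubit_bloch f0 f1 (n - 4).
Proof.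
case: e0 e1 f0 f1 => [a0 b0] [a1 b1] [c0 d0] [c1 d1].
by case: n => [|[|[|[|[|[|[|[|n]]]]]]]] //= _; rewrite /cnorm2 /cdot /ccross /=; ring.
Qed.

Lemma amp_tens (e f : 'cV[R[i]]_2) a b : amp (e *t f) a b = e a 0 * f b 0.
Proof.
have -> : 0 = ord0 :> 'I_1 by apply: val_inj.
rewrite /amp -(tensmxE e f a b); congr (_ _ _); exact: val_inj.
Qed.

Lemma product_state (w : nat -> R) :
  \sum_(2 <= j < 5) w j ^+ 2 = 1 -> \sum_(5 <= j < 8) w j ^+ 2 = 1 ->
  exists rho, pure2 rho /\ forall j, (2 <= j < 8)%N -> bloch rho j = w j.
Proof.
rewrite unlock /= !addr0 !addrA.
move=> /qubit_bloch_surj [e0 [e1 [/= he0 he1 he2 he3]]].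
move=> /qubit_bloch_surj [f0 [f1 [/= hf0 hf1 hf2 hf3]]].
pose psi : 'cV_(2 * 2) := (\col_a [:: e0; e1]`_a) *t (\col_b [:: f0; f1]`_b).
have psi_bloch : amp_bloch psi = bloch_poly (e0 * f0) (e0 * f1) (e1 * f0) (e1 * f1).
  by rewrite /amp_bloch !amp_tens !mxE.
exists (density psi); split.
  exists psi; split => //; rewrite unit_vectorE psi_bloch bloch_poly_tens //=.
  by rewrite he0 hf0 mulr1.
move=> j hj; rewrite bloch_density ?psi_bloch ?bloch_poly_tens; try by move: hj; lia.
by case: j hj => [|[|[|[|[|[|[|[|j]]]]]]]] //= _; rewrite ?he0 ?hf0 ?mulr1 ?mul1r.
Qed.

Lemma sup_eq_max {E : set R} {x} : E x -> ubound E x -> sup E = x.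
Proof.
move=> Ex ubx; apply/eqP; rewrite eq_le ge_sup //=; last by exists x.
by apply: ub_le_sup => //; exists x.
Qed.

Lemma inf_eq_min {E : set R} {x} : E x -> lbound E x -> inf E = x.
Proof.
move=> Ex lbx; apply/eqP; rewrite eq_le lb_le_inf ?andbT //; last by exists x.
by apply: (ge_inf _ Ex); exists x.
Qed.

Definition triple_start n : nat := if (n <= 4)%N then 2 else 5.

Lemma pure2_triple_norm2_le1 {rho} n : pure2 rho ->
  \sum_(triple_start n <= j < triple_start n + 3) bloch rho j ^+ 2 <= 1.
Proof.
move=> hp; rewrite /triple_start; case: ifP => _; first exact: pure2_alpha_norm2_le1.
by rewrite -/(beta_norm2 rho) pure2_beta_norm2 //; exact: pure2_alpha_norm2_le1.
Qed.

Lemma fiber_local_sqr_le {rho n x} : (2 <= n < 8)%N -> fiber rho n x ->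
  x ^+ 2 <= 1 - \sum_(triple_start n <= j < n) bloch rho j ^+ 2.
Proof.
move=> hn [rho' [hp [agree ->]]]; set m := triple_start n.
have [m2 mn nm] : [/\ (2 <= m)%N, (m <= n)%N & (n < m + 3)%N].
  by rewrite /m /triple_start; case: ifP => h; split; lia.
have -> : \sum_(m <= j < n) bloch rho j ^+ 2 = \sum_(m <= j < n) bloch rho' j ^+ 2.
  by apply: eq_big_nat => j hj; rewrite agree //; lia.
have := pure2_triple_norm2_le1 n hp; rewrite -/m (big_cat_nat _ (n := n.+1)); try lia.
rewrite big_nat_recr /=; last lia.
have : 0 <= \sum_(n.+1 <= j < m + 3) bloch rho' j ^+ 2 by apply: sumr_ge0 => j _; exact: sqr_ge0.
lra.
Qed.

Lemma fiber_local_mem rho n t : pure2 rho -> alpha_norm2 rho = 1 -> (2 <= n < 8)%N ->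
  t ^+ 2 = 1 - \sum_(triple_start n <= j < n) bloch rho j ^+ 2 -> fiber rho n t.
Proof.
move=> hp hA hn ht.
(* rho's components before n, then t, then zeros; beta := (1, 0, 0) when n <= 4 *)
pose w j := if (j < n)%N then bloch rho j else if j == n then t else (j == 5)%:R.
have [rho' [hp' Ew]] : exists rho', pure2 rho' /\ forall j, (2 <= j < 8)%N -> bloch rho' j = w j.
  apply: product_state; rewrite {}/w; move: hA ht; rewrite /alpha_norm2 /triple_start;
    move: (bloch rho) => b; case: n hn => [|[|[|[|[|[|[|[|n]]]]]]]] //= _; rewrite unlock /=; lra.
exists rho'; split=> //; split; last by rewrite Ew ?/w ?eqxx ?ltnn.
move=> j /andP[j1 jn]; have [->|j2] := eqVneq j 1%N; first by rewrite !pure2_bloch1.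
by rewrite Ew /w ?jn //; lia.
Qed.

Lemma hmid_local_eq0 rho n : pure2 rho -> alpha_norm2 rho = 1 -> (2 <= n < 8)%N ->
  hmid rho n = 0.
Proof.
move=> hp hA hn; set r2 := 1 - \sum_(triple_start n <= j < n) bloch rho j ^+ 2.
have r2_ge0 : 0 <= r2.
  have Fb : fiber rho n (bloch rho n) by exists rho.
  by have := fiber_local_sqr_le hn Fb; rewrite -/r2; have := sqr_ge0 (bloch rho n); lra.
set r := Num.sqrt r2; have r2E : r ^+ 2 = r2 by rewrite sqr_sqrtr.
have r_ge0 : 0 <= r := sqrtr_ge0 r2.
have Fr : fiber rho n r by apply: fiber_local_mem.
have FNr : fiber rho n (- r) by apply: fiber_local_mem; rewrite // sqrrN.
rewrite /hmid /bmax /bmin (sup_eq_max Fr) ?(inf_eq_min FNr) ?subrr ?mul0r //.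
all: by move=> x /(fiber_local_sqr_le hn); rewrite -/r2 -r2E; nra.
Qed.

Lemma hmid_corr rho n : pure2 rho -> alpha_norm2 rho = 1 -> (8 <= n < 17)%N ->
  hmid rho n = bloch rho n.
Proof.
move=> hp hA hn.
have [j [k ->]] : exists j k : 'I_3, n = (8 + 3 * j + k)%N.
  have hj : ((n - 8) %/ 3 < 3)%N by lia.
  have hk : ((n - 8) %% 3 < 3)%N by lia.
  by exists (Ordinal hj), (Ordinal hk) => /=; lia.
have hjk : [/\ (j < 3)%N & (k < 3)%N] by split.
have fiber_pt x : fiber rho (8 + 3 * j + k) x -> x = bloch rho (8 + 3 * j + k).
  case=> rho' [hp' [agree ->]].
  have agree' i : (1 <= i < 8)%N -> bloch rho' i = bloch rho i.
    by move=> hi; apply: agree; case: hjk; lia.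
  have hA' : alpha_norm2 rho' = 1.
    by rewrite -hA; apply: eq_big_nat => i hi; rewrite agree' //; lia.
  by rewrite !pure2_corr_product // !agree' //; case: hjk; lia.
have Fb : fiber rho (8 + 3 * j + k) (bloch rho (8 + 3 * j + k)) by exists rho.
rewrite /hmid /bmax /bmin (sup_eq_max Fb) ?(inf_eq_min Fb).
- by field.
- by move=> x /fiber_pt ->.
- by move=> x /fiber_pt ->.
Qed.

Lemma Dchi2_0 (b : R) : Dchi2 b 0 = b ^+ 2.
Proof.
rewrite /Dchi2 (_ : (0 == 1) || (0 == -1) = false) /=; first by field.
by apply/norP; split; apply/eqP; lra.
Qed.

Lemma Dchi2_id (b : R) : Dchi2 b b = 0.
Proof.
rewrite /Dchi2; case: ifP => // /norP [b1 bN1].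
by field; rewrite subr_eq0 addr_eq0 eq_sym b1 bN1.
Qed.

Lemma I_chi2_post_alpha_unit rho : pure2 rho -> alpha_norm2 rho = 1 ->
  I_chi2_post rho = alpha_norm2 rho + beta_norm2 rho.
Proof.
move=> hp hA; rewrite /I_chi2_post (big_cat_nat _ (n := 8)) //=.
have -> : \sum_(8 <= i < 17) Dchi2 (bloch rho i) (hmid rho i) = 0.
  by rewrite big_nat big1 // => i hi; rewrite hmid_corr // Dchi2_id.
rewrite addr0 /alpha_norm2 /beta_norm2 -big_cat_nat //.
by apply: eq_big_nat => i hi; rewrite hmid_local_eq0 // Dchi2_0.
Qed.


End TwoQubitBloch.

Arguments alpha_norm2 {R}.

Theorem lemma4 (R : realType) (rho : 'M[R[i]]_(2 * 2)) (O1 O2 : 'M[R]_3)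
    (theta : R) :
  pure2 rho -> SO3 O1 -> SO3 O2 ->
  0 <= theta <= pi / 2 ->
  bl_alpha rho = O1 *m (\col_(j < 3) [:: cos theta; 0; 0]`_j) ->
  bl_beta rho = O2 *m (\col_(j < 3) [:: cos theta; 0; 0]`_j) ->
  bl_C rho = O1 *m diag_mx (\row_(j < 3) [:: 1; sin theta; - sin theta]`_j)
               *m O2^T ->
  `|cos theta| = 1 ->
  I_chi2_post rho = 2.
Proof.
move=> hp [O1_orth _] _ _ halpha _ _ hcos.
have cos2 : cos theta ^+ 2 = 1 by rewrite -real_normK ?num_real // hcos expr1n.
have hA : alpha_norm2 rho = 1.
  rewrite alpha_norm2E halpha orthogonal_norm2 // mxE !big_ord_recl big_ord0 !mxE /=.
  lra.
rewrite I_chi2_post_alpha_unit // pure2_beta_norm2 // hA; lra.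
Qed.
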